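(* Let $d\ge2$, $n\ge1$, $d\le t\le dn$, let $\gamma$ be a positive conductivity on the lattice graph below, fix $p\in L_t$, and let $M_p=\mathcal N(p)\cap(J_{t-1}^{\mathcal S}\cup L_{t-1}^{\mathcal S})$. Write $W=L_{t-1}^{\mathcal S}\cup J_{t-1}^{\mathcal S}$. Then: (i) the vectors $\{\mathbf v_q|_{W\setminus M_p}:q\in L_t^{\mathcal S}\setminus\{p\}\}$ are linearly independent; (ii) if $\mathbf w\in\operatorname{span}\{\mathbf v_q|_{W}:q\in L_t^{\mathcal S}\}$ is supported in $M_p$, then $\mathbf w=\alpha\,\mathbf v_p|_{W}$ for some $\alpha\in\mathbb R$.
   Context: Lattice: $D=\{x\in\mathbb Z^d:1\le x_i\le n\ \forall i\}$, $\partial D=\{p\in\mathbb Z^d:\min_{q\in D}\|q-p\|_{\ell^1}=1\}$; $E$ = unordered pairs $pq\subseteq D\cup\partial D$ with $\|p-q\|_{\ell^1}=1$, not both in $\partial D$; $\mathcal N(p)=\{q:pq\in E\}$. Conductivity $\gamma:E\to(0,\infty)$, symmetric. For $q\in D\cup\partial D$, $\mathbf v_q\in\mathbb R^{D\cup\partial D}$ has $(\mathbf v_q)_r=\gamma_{qr}$ for $r\in\mathcal N(q)$, $(\mathbf v_q)_q=-\sum_{r\in\mathcal N(q)}\gamma_{qr}$, and $0$ elsewhere. With $s(x)=\sum_ix_i$: $L_t=\{x\in D:s(x)=t\}$, $L_t^{\mathcal S}=\{x\in D:s(x)\le t\}$, $K_t^+=\{x\in\partial D:s(x)=t,\max_ix_i=n+1\}$,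 $K_t^-=\{x\in\partial D:s(x)=t,\min_ix_i=0\}$, $K_t^{\mathcal S\pm}=\bigcup_{\ell\le t}K_\ell^\pm$, $J_t^{\mathcal S}=K_t^{\mathcal S-}\cup K_{t+1}^{\mathcal S+}$. *)

From HB Require Import structures.
From mathcomp Require Import all_boot all_order all_algebra.
From mathcomp Require Import reals.
Set Implicit Arguments. Unset Strict Implicit. Unset Printing Implicit Defensive.
Import Order.TTheory GRing.Theory Num.Theory.
Local Open Scope ring_scope.

Section Lattice.
Variables (d n : nat).

(* Points of the box {0,...,n+1}^d; D ∪ ∂D is contained in it. Coordinate
   values are the integer coordinates. *)
Definition pt := {ffun 'I_d -> 'I_n.+2}.

Definition coord (x : pt) (i : 'I_d) : nat := nat_of_ord (x i).

Definition absdiff (a b : nat) : nat := ((a - b) + (b - a))%N.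

Definition l1 (x y : pt) : nat := (\sum_(i < d) absdiff (coord x i) (coord y i))%N.

Definition inD (x : pt) : bool := [forall i, (1 <= coord x i <= n)%N].
Definition Dset : {set pt} := [set x | inD x].

(* ∂D = {p : min_{q in D} ||q - p||_1 = 1}: some q in D at distance 1 and
   none at distance 0 *)
Definition inBd (x : pt) : bool :=
  [exists q, inD q && (l1 q x == 1%N)] && [forall q, inD q ==> (l1 q x != 0%N)].
Definition Bd : {set pt} := [set x | inBd x].

Definition inV (x : pt) : bool := inD x || inBd x.

Definition edge (x y : pt) : bool :=
  [&& inV x, inV y, l1 x y == 1%N & ~~ (inBd x && inBd y)].

Definition nbr (x : pt) : {set pt} := [set y | edge x y].

(* the vector v_q in R^{D ∪ ∂D} (as a function on the box, zero elsewhere) *)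
Definition vvec (R : realType) (gamma : pt -> pt -> R) (q r : pt) : R :=
  if r \in nbr q then gamma q r
  else if r == q then - \sum_(s in nbr q) gamma q s else 0.

Definition ssum (x : pt) : nat := (\sum_(i < d) coord x i)%N.

Definition Lt (t : nat) : {set pt} := [set x | inD x & ssum x == t].
Definition LtS (t : nat) : {set pt} := [set x | inD x & (ssum x <= t)%N].
(* max_i x_i = n+1  (coordinates are <= n+1) *)
Definition Kp (t : nat) : {set pt} :=
  [set x | [&& inBd x, ssum x == t & [exists i, coord x i == n.+1]]].
Definition Km (t : nat) : {set pt} :=
  [set x | [&& inBd x, ssum x == t & [exists i, coord x i == 0%N]]].
Definition KpS (t : nat) : {set pt} := \bigcup_(l < t.+1) Kp l.
Definition KmS (t : nat) : {set pt} := \bigcup_(l < t.+1) Km l.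
Definition JS (t : nat) : {set pt} := KmS t :|: KpS t.+1.

End Lattice.

Definition lin_indep (R : realType) (I : finType) (A B : {set I})
  (f : I -> I -> R) : Prop :=
  forall c : I -> R,
    (forall r, r \in B -> \sum_(q in A) c q * f q r = 0) ->
    forall q, q \in A -> c q = 0.

Definition in_span (R : realType) (I : finType) (A B : {set I})
  (f : I -> I -> R) (w : I -> R) : Prop :=
  exists c : I -> R, forall r, r \in B -> w r = \sum_(q in A) c q * f q r.

From Pilot Require Import Defs.
From HB Require Import structures.
From mathcomp Require Import all_boot all_order all_algebra.
From mathcomp Require Import reals.
From mathcomp Require Import zify.
Set Implicit Arguments. Unset Strict Implicit. Unset Printing Implicit Defensive.
Import Order.TTheory GRing.Theory Num.Theory.
Local Open Scope ring_scope.

(* (i) is a triangularity argument.  For q <> p in L_t^S, lower q by one at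
   the first coordinate i where q_i < p_i.  The point r obtained lies in W,
   is at l^1-distance at least 2 from p (so r is not in M_p), and v_q(r) > 0.
   Every other q' with v_q'(r) <> 0 is r itself or a neighbour of r, and is
   strictly below q in the order by s(q') and then by the potential
   sum_m (d - m) min(q'_m, p_m): the only way for q' to keep s(q') = s(q) is
   to raise r at some l <> i, which gains weight d - l < d - i at most.
   (ii) follows since v_p vanishes on W \ M_p: writing w = sum_q c_q v_q, the
   coefficients c_q with q <> p vanish by (i). *)

Section TriangularFamilies.
Variables (R : realType) (I : finType).
Implicit Types (A B M : {set I}) (f : I -> I -> R).

Lemma lin_indep_triangular A B f (key : I -> nat) :
  (forall q, q \in A -> exists2 r, r \in B &
     f q r != 0 /\ forall q', q' \in A -> q' != q -> f q' r != 0 ->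
                              (key q' < key q)%N) ->
  lin_indep A B f.
Proof.
move=> tri c c_rel.
suff c0 k q : q \in A -> (key q < k)%N -> c q = 0 by move=> q /c0; apply.
elim: k q => [//|k IHk] q qA lt_qk.
have [r rB [fqr_neq0 below]] := tri q qA.
have := c_rel r rB; rewrite (bigD1 q) //= big1 ?addr0.
  by move/eqP; rewrite mulf_eq0 (negbTE fqr_neq0) orbF => /eqP.
move=> q' /andP[q'A q'q]; have [->|fq'r_neq0] := eqVneq (f q' r) 0.
  by rewrite mulr0.
by rewrite (IHk q') ?mul0r // (leq_trans (below _ _ _ _) lt_qk).
Qed.

Lemma span_supported_multiple A B M f p (w : I -> R) :
  p \in A -> lin_indep (A :\ p) (B :\: M) f ->
  (forall r, r \in B -> r \notin M -> f p r = 0) ->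
  in_span A B f w -> (forall r, r \in B -> r \notin M -> w r = 0) ->
  exists alpha, forall r, r \in B -> w r = alpha * f p r.
Proof.
move=> pA indep fp0 [c w_sum] w0.
have c0 q : q \in A :\ p -> c q = 0.
  apply: indep => r; rewrite inE => /andP[rM rB].
  have := w_sum r rB; rewrite w0 // (bigD1 p) //= fp0 // mulr0 add0r => sum0.
  by rewrite [RHS]sum0; apply: eq_bigl => q'; rewrite !inE andbC.
exists (c p) => r rB; rewrite w_sum // (bigD1 p) //= big1 ?addr0 //.
by move=> q /andP[qA qp]; rewrite c0 ?mul0r // !inE qp.
Qed.

End TriangularFamilies.

Section LatticeGeometry.
Variables d n : nat.
Local Notation pt := (pt d n).
Local Notation coord := Defs.coord.
Implicit Types (p q r x y : pt) (i l : 'I_d).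

Lemma coord_inj x y : (forall m, coord x m = coord y m) -> x = y.
Proof. by move=> eq_xy; apply/ffunP => m; apply/val_inj; exact: eq_xy. Qed.

Lemma sum_coord_upd (F : 'I_d -> nat -> nat) x y i :
  (forall m, m != i -> coord x m = coord y m) ->
  (\sum_(m < d) F m (coord x m) + F i (coord y i) =
   \sum_(m < d) F m (coord y m) + F i (coord x i))%N.
Proof.
move=> eq_off; rewrite (bigD1 i) //=.
rewrite [(\sum_(m < d) F m (coord y m))%N](bigD1 i) //=.
by rewrite (eq_bigr (fun m => F m (coord y m))) => [|m /eq_off -> //]; lia.
Qed.

Lemma l1_xx x : l1 x x = 0%N.
Proof. by rewrite /l1 big1 // => m _; rewrite /absdiff subnn. Qed.

Lemma l1_eq0 x y : l1 x y = 0%N -> x = y.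
Proof.
move/eqP; rewrite sum_nat_eq0 => /forallP l1_0; apply: coord_inj => m.
by move: (l1_0 m); rewrite /absdiff; lia.
Qed.

Definition step_up l y x : Prop :=
  (forall m, m != l -> coord x m = coord y m) /\ coord x l = (coord y l).+1.

Lemma step_up_eq l y x x' : step_up l y x -> step_up l y x' -> x = x'.
Proof.
move=> [off_x l_x] [off_x' l_x']; apply: coord_inj => m.
by have [->|ml] := eqVneq m l; rewrite ?l_x ?l_x' ?off_x ?off_x'.
Qed.

Lemma ssum_step_up l y x : step_up l y x -> ssum x = (ssum y).+1.
Proof.
move=> [eq_off eq_l]; have /= := sum_coord_upd (fun _ a => a) eq_off.
by rewrite -/(ssum x) -/(ssum y) eq_l; lia.
Qed.

Lemma l1_step_up l y x : step_up l y x -> l1 x y = 1%N.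
Proof.
move=> [eq_off eq_l]; apply/eqP/sum_nat_eq1; exists l; split=> //.
  by rewrite /absdiff eq_l; lia.
by move=> m /eq_off eq_m _; rewrite /absdiff eq_m; lia.
Qed.

Lemma l1_eq1 x y : l1 x y = 1%N -> exists l, step_up l y x \/ step_up l x y.
Proof.
move/eqP/sum_nat_eq1 => [l [_ diff_l diff_off]]; exists l.
have eq_off m : m != l -> coord x m = coord y m.
  by move=> ml; move: (diff_off m ml isT); rewrite /absdiff; lia.
move: diff_l; rewrite /absdiff => diff_l.
by case: (ltnP (coord x l) (coord y l)) => cmp; [right|left];
  split=> [m /eq_off -> //|]; lia.
Qed.

Lemma l1_step_up_away p l y x :
  step_up l y x -> (coord x l <= coord p l)%N -> l1 p y = (l1 p x).+1.
Proof.
move=> [eq_off eq_l] le_xp.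
have /= := sum_coord_upd (fun m a => absdiff (coord p m) a) eq_off.
by rewrite -/(l1 p x) -/(l1 p y) /absdiff eq_l; lia.
Qed.

Definition potential p x :=
  (\sum_(m < d) (d - m) * minn (coord x m) (coord p m))%N.

(* Encodes the lexicographic order on (ssum x, potential p x), since
   potential p x <= potential p p. *)
Definition key p x := (ssum x * (potential p p).+1 + potential p x)%N.

Lemma potential_le p x : (potential p x <= potential p p)%N.
Proof. by apply: leq_sum => m _; rewrite leq_mul2l minnn geq_minr orbT. Qed.

Lemma key_lt_ssum p x y : (ssum x < ssum y)%N -> (key p x < key p y)%N.
Proof.
move=> lt_xy; have := potential_le p x.
have : ((ssum x).+1 * (potential p p).+1 <= ssum y * (potential p p).+1)%N.
  by rewrite leq_mul2r lt_xy orbT.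
by rewrite /key mulSn; lia.
Qed.

Lemma potential_step_up p l y x : step_up l y x ->
  potential p x = (potential p y + (d - l) * (coord y l < coord p l))%N.
Proof.
move=> [eq_off eq_l].
have /= := sum_coord_upd (fun m a => (d - m) * minn a (coord p m))%N eq_off.
have min_succ : minn (coord y l).+1 (coord p l) =
                (minn (coord y l) (coord p l) + (coord y l < coord p l))%N.
  by case: ltnP => /=; lia.
by rewrite -/(potential p x) -/(potential p y) eq_l min_succ mulnDr; lia.
Qed.

Definition lower q i : pt :=
  [ffun m => if m == i then inord (coord q i).-1 else q m].

Lemma step_up_lower q i : (0 < coord q i)%N -> step_up i (lower q i) q.
Proof.
move=> q_i_pos; have lower_i : coord (lower q i) i = (coord q i).-1.
  rewrite /coord ffunE eqxx inordK //.
  exact: leq_ltn_trans (leq_pred _) (ltn_ord _).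
split=> [m /negbTE mi|]; first by rewrite /coord ffunE mi.
by rewrite lower_i; lia.
Qed.

Lemma key_lt_lower p q q' i :
  (0 < coord q i < coord p i)%N ->
  (forall j, coord q j < coord p j -> i <= j)%N -> q' != q ->
  l1 q' (lower q i) = 1%N \/ q' = lower q i -> (key p q' < key p q)%N.
Proof.
move=> /andP[q_i_pos q_i_lt] i_min q'q adj.
have step_q : step_up i (lower q i) q by exact: step_up_lower.
have ssum_q := ssum_step_up step_q.
have below x : (ssum x <= ssum (lower q i))%N -> (key p x < key p q)%N.
  by move=> le_xr; apply: key_lt_ssum; lia.
case: adj => [/l1_eq1 [l [step_q' | /ssum_step_up ssum_r]] | ->]; last 2 first.
- by apply: below; lia.
- exact: below (leqnn _).
have [li | li] := eqVneq l i.
  by rewrite li in step_q'; rewrite (step_up_eq step_q' step_q) eqxx in q'q.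
rewrite /key (ssum_step_up step_q') -ssum_q ltn_add2l.
rewrite (potential_step_up p step_q') (potential_step_up p step_q) ltn_add2l.
have [off_q eq_i] := step_q.
have -> : (coord (lower q i) i < coord p i)%N by lia.
rewrite -(off_q l li) muln1; have lt_id := ltn_ord i.
have neq_li : nat_of_ord l != i := li.
by case: (ltnP (coord q l) (coord p l)) => [/i_min|]; rewrite /= ?muln0 ?muln1;
  lia.
Qed.

Lemma inD_notBd x : inD x -> ~~ inBd x.
Proof.
move=> xD; rewrite negb_and negb_forall; apply/orP; right.
by apply/existsP; exists x; rewrite xD l1_xx.
Qed.

Lemma lower_inD_or_Bd q i : inD q ->
  inD (lower q i) \/ inBd (lower q i) /\ coord (lower q i) i = 0%N.
Proof.
move=> qD; have q_bounds := forallP qD.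
have [off_q eq_i] := step_up_lower (proj1 (andP (q_bounds i))).
case: (ltnP 1 (coord q i)) => q_i_gt1; [left | right].
  apply/forallP => m; have [->|mi] := eqVneq m i; last by rewrite -off_q.
  by have := q_bounds i; lia.
split; last by lia.
apply/andP; split.
  by apply/existsP; exists q; rewrite qD (l1_step_up (conj off_q eq_i)).
apply/forallP => x; apply/implyP => xD; apply/contraTneq: xD => /l1_eq0 ->.
by apply/forallPn; exists i; lia.
Qed.

Lemma edge_lower q i : inD q -> edge q (lower q i).
Proof.
move=> qD; have step_q := step_up_lower (proj1 (andP (forallP qD i))).
rewrite /edge /inV qD (l1_step_up step_q) (negbTE (inD_notBd qD)) /=.
by case: (lower_inD_or_Bd i qD) => [-> | [-> _]]; rewrite ?orbT.
Qed.

Lemma lower_mem_W t q i : inD q -> (ssum q <= t)%N ->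
  lower q i \in LtS d n t.-1 :|: JS d n t.-1.
Proof.
move=> qD ssum_q.
have /ssum_step_up ssum_r := step_up_lower (proj1 (andP (forallP qD i))).
have le_r : (ssum (lower q i) <= t.-1)%N by lia.
rewrite !inE; case: (lower_inD_or_Bd i qD) => [-> | [rBd r_i]].
  by rewrite le_r.
apply/orP; right; apply/orP; left; apply/bigcupP.
exists (Ordinal (leq_ltn_trans le_r (ltnSn _))) => //.
by rewrite !inE rBd eqxx; apply/existsP; exists i; rewrite r_i.
Qed.

Lemma not_edge_lower p q i : q != p -> (0 < coord q i < coord p i)%N ->
  ~~ edge p (lower q i).
Proof.
move=> qp /andP[q_i_pos q_i_lt].
have l1_pq : l1 p q != 0%N by apply: contra_neq qp => /l1_eq0 ->.
rewrite /edge (l1_step_up_away (step_up_lower q_i_pos) (ltnW q_i_lt)) eqSS.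
by rewrite (negbTE l1_pq) /= !andbF.
Qed.

Lemma exists_coord_lt p q : (ssum q <= ssum p)%N -> q != p ->
  exists j, (coord q j < coord p j)%N.
Proof.
move=> le_qp qp.
have [j lt_j | ge_all] := pickP (fun j => coord q j < coord p j)%N.
  by exists j.
have ge j : (coord p j <= coord q j)%N by rewrite leqNgt ge_all.
have [le_pq eq_iff] := leqif_sum (fun j (_ : true) => leqif_eq (ge j)).
have /forall_inP all_eq : [forall (j | true), coord p j == coord q j].
  by rewrite -eq_iff -/(ssum p) -/(ssum q) eqn_leq le_pq le_qp.
by case/eqP: qp; apply: coord_inj => m; apply/esym/eqP/all_eq.
Qed.

Lemma lower_witness t p q : p \in Lt d n t -> q \in LtS d n t -> q != p ->
  exists r, [/\ r \in LtS d n t.-1 :|: JS d n t.-1, ~~ edge p r, edge q r &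
    forall q', q' != q -> edge q' r || (q' == r) -> (key p q' < key p q)%N].
Proof.
rewrite !inE => /andP[pD /eqP ssum_p] /andP[qD ssum_q] qp.
have [j0 lt_j0] : exists j, (coord q j < coord p j)%N.
  by apply: exists_coord_lt qp; rewrite ssum_p.
have [i lt_i i_min] :=
  @arg_minnP _ j0 (fun j => coord q j < coord p j)%N (@nat_of_ord d) lt_j0.
have q_i_bounds : (0 < coord q i < coord p i)%N.
  by rewrite lt_i andbT; case/andP: (forallP qD i).
exists (lower q i); split.
- exact: lower_mem_W.
- exact: not_edge_lower.
- exact: edge_lower.
move=> q' q'q adj; apply: (key_lt_lower q_i_bounds i_min q'q).
by case/orP: adj => [/and4P[_ _ /eqP -> _] | /eqP ->]; [left | right].
Qed.

Lemma Lt_notin_W t p : (0 < t)%N -> p \in Lt d n t ->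
  p \notin LtS d n t.-1 :|: JS d n t.-1.
Proof.
rewrite !inE => t_pos /andP[pD /eqP ->]; have /negbTE pBd := inD_notBd pD.
have -> : (t <= t.-1)%N = false by lia.
by rewrite andbF /=; apply/norP; split; apply/negP => /bigcupP[l _];
  rewrite inE pBd.
Qed.

End LatticeGeometry.

Section ConductivityVectors.
Variables (R : realType) (d n : nat) (gamma : pt d n -> pt d n -> R).
Implicit Types q r : pt d n.

Lemma vvec_edge q r : edge q r -> vvec gamma q r = gamma q r.
Proof. by rewrite /vvec inE => ->. Qed.

Lemma vvec_out q r : ~~ edge q r -> r != q -> vvec gamma q r = 0.
Proof. by rewrite /vvec inE => /negbTE -> /negbTE ->. Qed.

Lemma vvec_neq0 q r : vvec gamma q r != 0 -> edge q r || (q == r).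
Proof.
apply: contraR; rewrite negb_or eq_sym => /andP[not_qr rq].
by rewrite vvec_out ?eqxx.
Qed.

End ConductivityVectors.

Theorem corollary3p5 (R : realType) (d n t : nat)
  (gamma : pt d n -> pt d n -> R) (p : pt d n) :
  (2 <= d)%N -> (1 <= n)%N -> (d <= t <= d * n)%N ->
  (forall x y, edge x y -> gamma x y = gamma y x) ->
  (forall x y, edge x y -> 0 < gamma x y) ->
  p \in Lt d n t ->
  let Mp := nbr p :&: (JS d n (t.-1) :|: LtS d n (t.-1)) in
  let W := LtS d n (t.-1) :|: JS d n (t.-1) in
  lin_indep (LtS d n t :\ p) (W :\: Mp) (vvec gamma) /\
  (forall w : pt d n -> R,
     in_span (LtS d n t) W (vvec gamma) w ->
     (forall r, r \in W -> r \notin Mp -> w r = 0) ->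
     exists alpha : R, forall r, r \in W -> w r = alpha * vvec gamma p r).
Proof.
move=> le2d _ /andP[le_dt _] _ gamma_pos pL Mp W.
have off_Mp r : r \in W -> r \notin Mp -> ~~ edge p r.
  by rewrite /Mp /W !inE => rW; apply: contraNN => ->; rewrite orbC.
have indep : lin_indep (LtS d n t :\ p) (W :\: Mp) (vvec gamma).
  apply: (lin_indep_triangular (key := key p)) => q.
  rewrite in_setD1 => /andP[qp qL].
  have [r [rW not_pr qr below]] := lower_witness pL qL qp.
  exists r.
    by rewrite /Mp /W in_setD rW andbT in_setI inE (negbTE not_pr).
  split; first by rewrite vvec_edge // gt_eqF // gamma_pos.
  by move=> q' _ q'q /vvec_neq0; apply: below.
split=> // w; apply: (span_supported_multiple _ indep).
  by move: pL; rewrite !inE => /andP[-> /eqP ->] /=.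
have pW : p \notin W by apply: Lt_notin_W pL; lia.
move=> r rW /(off_Mp r rW) not_pr; apply: vvec_out not_pr _.
by apply: contraNneq pW => <-.
Qed.
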